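(* Let $\mathbb{D}^n\subseteq\mathbb{R}^n$ and $\mathbb{D}^m\subseteq\mathbb{R}^m$ be unbounded sets and let $f:\mathbb{D}^n\to\mathbb{D}^m$ be surjective. Let $g:\mathbb{D}^n\to\mathbb{D}^m$ be any neural network, i.e. $g=\omega\circ h_k\circ\cdots\circ h_1\circ\iota$ with a linear input layer $\iota:\mathbb{D}^n\to\mathbb{D}^{p_1}$, finitely many hidden layers $h_1,\dots,h_k$ ($h_j:\mathbb{D}^{p_j}\to\mathbb{D}^{q_j}$, the co-domain of each $h_j$ equal to the domain of $h_{j+1}$), and a linear output layer $\omega:\mathbb{D}^{q_k}\to\mathbb{D}^m$, such that $g$ has an activation bottleneck located in some hidden layer $h_i$ (the image of $h_i$ is bounded) and all layers after $h_i$ (namely $h_{i+1},\dots,h_k$ and $\omega$) are Lipschitz continuous. Then the maximum approximation error satisfies $$\varepsilon^\star_{f,g}=\sup\{\varepsilon\in\mathbb{R}^+:\exists x\in\mathbb{D}^n:\ \|f(x)-g(x)\|\ge\varepsilon\}=\infty.$$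
   Context: For each natural number $d$, $\mathbb{D}^d$ denotes a subset of $\mathbb{R}^d$; $\|\cdot\|$ is the Euclidean norm on $\mathbb{R}^m$. A hidden layer is a function $h:\mathbb{D}^p\to\mathbb{D}^q$ for natural numbers $p,q$. A neural network has an activation bottleneck if at least one of its hidden layers has bounded image; the bottleneck is said to be located in that layer. The quantity $\varepsilon^\star_{f,g}$ is called the maximum approximation error of $g$ on $f$. *)

From HB Require Import structures.
From mathcomp Require Import all_boot all_order all_algebra.
From mathcomp Require Import classical_sets reals constructive_ereal ereal.
Set Implicit Arguments. Unset Strict Implicit. Unset Printing Implicit Defensive.
Import Order.TTheory GRing.Theory Num.Theory.
Local Open Scope classical_set_scope.
Local Open Scope ring_scope.

Section Defs.
Variable R : realType.

Definition enorm (d : nat) (v : 'rV[R]_d) : R :=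
  Num.sqrt (\sum_(i < d) (v ord0 i) ^+ 2).

Definition ebounded (d : nat) (A : set 'rV[R]_d) : Prop :=
  exists M : R, forall x, A x -> enorm x <= M.

Definition maps_into (p q : nat) (A : set 'rV[R]_p) (B : set 'rV[R]_q)
  (F : 'rV[R]_p -> 'rV[R]_q) : Prop := forall x, A x -> B (F x).

Definition surj_onto (p q : nat) (A : set 'rV[R]_p) (B : set 'rV[R]_q)
  (F : 'rV[R]_p -> 'rV[R]_q) : Prop := forall y, B y -> exists2 x, A x & F x = y.

Definition affine_layer (p q : nat) (F : 'rV[R]_p -> 'rV[R]_q) : Prop :=
  exists (W : 'M[R]_(p, q)) (b : 'rV[R]_q), forall x, F x = x *m W + b.

Definition lipschitz_on (p q : nat) (A : set 'rV[R]_p)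
  (F : 'rV[R]_p -> 'rV[R]_q) : Prop :=
  exists L : R, forall x y, A x -> A y -> enorm (F x - F y) <= L * enorm (x - y).

Fixpoint hidden_comp (d : nat -> nat) (h : forall j, 'rV[R]_(d j) -> 'rV[R]_(d j.+1))
  (j : nat) : 'rV[R]_(d 0%N) -> 'rV[R]_(d j) :=
  match j return 'rV[R]_(d 0%N) -> 'rV[R]_(d j) with
  | 0%N => fun x => x
  | j'.+1 => fun x => h j' (hidden_comp h j' x)
  end.

(* The network g = omega o h_{k-1} o ... o h_0 o iota. *)
Definition network (n m k : nat) (d : nat -> nat)
  (iota : 'rV[R]_n -> 'rV[R]_(d 0%N))
  (h : forall j, 'rV[R]_(d j) -> 'rV[R]_(d j.+1))
  (omega : 'rV[R]_(d k) -> 'rV[R]_m) : 'rV[R]_n -> 'rV[R]_m :=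
  fun x => omega (hidden_comp h k (iota x)).

Definition max_approx_error (n m : nat) (Dn : set 'rV[R]_n)
  (f g : 'rV[R]_n -> 'rV[R]_m) : \bar R :=
  ereal_sup [set (e%:E)%E | e in
     [set e : R | 0 < e /\ exists2 x, Dn x & e <= enorm (f x - g x)]].

End Defs.

(* Layers after the bottleneck are Lipschitz and Lipschitz maps send bounded
   sets to bounded sets, so the network has bounded image on D^n.  As f maps
   D^n onto the unbounded D^m, the error ||f x - g x|| >= ||f x||/2 - sup||g||
   is unbounded on D^n, and so is the set whose supremum defines eps*. *)
From mathcomp Require Import all_boot all_order all_algebra.
From mathcomp Require Import boolp classical_sets set_interval reals.
From mathcomp Require Import ereal lra.
Import Order.TTheory GRing.Theory Num.Theory.
Local Open Scope classical_set_scope.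
Local Open Scope ring_scope.

Section EuclideanNorm.
Context {R : realType}.

Lemma enorm_ge0 {p} (v : 'rV[R]_p) : 0 <= enorm v.
Proof. exact: sqrtr_ge0. Qed.

Lemma enormN {p} (v : 'rV[R]_p) : enorm (- v) = enorm v.
Proof. by congr Num.sqrt; apply: eq_bigr => j _; rewrite mxE sqrrN. Qed.

(* The constant 2 spares us the Cauchy-Schwarz inequality: coordinatewise,
   (x + y)^2 <= 2 x^2 + 2 y^2. *)
Lemma enormD_le {p} (u v : 'rV[R]_p) :
  enorm (u + v) <= 2 * (enorm u + enorm v).
Proof.
have sq_enorm (w : 'rV[R]_p) : enorm w ^+ 2 = \sum_(j < p) w ord0 j ^+ 2.
  by rewrite sqr_sqrtr // sumr_ge0 // => j _; rewrite sqr_ge0.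
have sqD : enorm (u + v) ^+ 2 <= 2 * enorm u ^+ 2 + 2 * enorm v ^+ 2.
  rewrite !sq_enorm !mulr_sumr -big_split /=; apply: ler_sum => j _.
  rewrite mxE; have := sqr_ge0 (u ord0 j - v ord0 j); rewrite !expr2; nra.
have := enorm_ge0 (u + v); have := enorm_ge0 u; have := enorm_ge0 v.
move: sqD; move: (enorm (u + v)) (enorm u) (enorm v) => s a b.
rewrite !expr2; nra.
Qed.

Lemma enormB_le {p} (u v : 'rV[R]_p) :
  enorm (u - v) <= 2 * (enorm u + enorm v).
Proof. by rewrite -(enormN v) enormD_le. Qed.

End EuclideanNorm.

Section Boundedness.
Context {R : realType}.

Lemma subset_ebounded {p} {A B : set 'rV[R]_p} :
  A `<=` B -> ebounded B -> ebounded A.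
Proof. by move=> AB [M BM]; exists M => x /AB /BM. Qed.

Lemma not_eboundedP {p} {A : set 'rV[R]_p} :
  ~ ebounded A -> forall M, exists2 x, A x & M < enorm x.
Proof.
move=> nbA M; apply: contra_notP nbA => noA; exists M => x Ax.
by rewrite leNgt; apply/negP => ltMx; apply: noA; exists x.
Qed.

Lemma lipschitz_on_ebounded {p q} {A B : set 'rV[R]_p} {F : 'rV[R]_p -> 'rV[R]_q} :
  lipschitz_on A F -> B `<=` A -> ebounded B -> ebounded (F @` B).
Proof.
move=> [L FL] BA [M BM].
have [[x0 Bx0]|B0] := pselect (B !=set0); last first.
  by exists 0 => y [x Bx _]; exfalso; apply: B0; exists x.
exists (2 * (`|L| * (2 * (M + enorm x0)) + enorm (F x0))) => y [x Bx <-].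
have Fxx0 : enorm (F x - F x0) <= `|L| * (2 * (M + enorm x0)).
  apply: le_trans (FL _ _ (BA _ Bx) (BA _ Bx0)) _.
  apply: le_trans (_ : _ <= `|L| * enorm (x - x0)) _.
    by rewrite ler_wpM2r ?enorm_ge0 ?ler_norm.
  by rewrite ler_wpM2l // (le_trans (enormB_le _ _)) // ler_pM2l // lerD2r BM.
rewrite -(subrK (F x0) (F x)); apply: (le_trans (enormD_le _ _)).
by rewrite ler_pM2l // lerD2r.
Qed.

End Boundedness.

Section Network.
Context {R : realType} {D : forall p : nat, set 'rV[R]_p}.
Context {k : nat} {d : nat -> nat} {h : forall j, 'rV[R]_(d j) -> 'rV[R]_(d j.+1)}.
Hypothesis h_maps : forall j, (j < k)%N -> maps_into (D (d j)) (D (d j.+1)) (h j).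

Lemma hidden_comp_maps_into j :
  (j <= k)%N -> maps_into (D (d 0%N)) (D (d j)) (hidden_comp h j).
Proof.
elim: j => [|j IH] jk x Dx //=.
by apply: h_maps => //; apply: IH => //; apply: ltnW.
Qed.

Lemma hidden_comp_ebounded i :
  ebounded (h i @` D (d i)) ->
  (forall j, (i < j < k)%N -> lipschitz_on (D (d j)) (h j)) ->
  forall j, (i < j <= k)%N -> ebounded (hidden_comp h j @` D (d 0%N)).
Proof.
move=> bottleneck lip; elim=> // j IH /andP [ij jk].
case: (eqVneq j i) jk => [-> {ij} | ji] jk.
  apply: subset_ebounded _ bottleneck => _ [x Dx <-] /=.
  by exists (hidden_comp h i x) => //; apply: hidden_comp_maps_into (ltnW jk) _ Dx.
have lt_ij : (i < j)%N by rewrite ltn_neqAle eq_sym ji -ltnS.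
rewrite -[hidden_comp h j.+1 @` _]/((h j \o hidden_comp h j) @` _) -image_comp.
apply: (lipschitz_on_ebounded (lip j _)); first by rewrite lt_ij.
- by move=> _ [x Dx <-]; apply: hidden_comp_maps_into (ltnW jk) _ Dx.
- by apply: IH; rewrite lt_ij ltnW.
Qed.

Lemma network_ebounded {n m} {iota : 'rV[R]_n -> 'rV[R]_(d 0%N)}
    {omega : 'rV[R]_(d k) -> 'rV[R]_m} {i} :
  maps_into (D n) (D (d 0%N)) iota -> (i < k)%N ->
  ebounded (h i @` D (d i)) ->
  (forall j, (i < j < k)%N -> lipschitz_on (D (d j)) (h j)) ->
  lipschitz_on (D (d k)) omega ->
  ebounded (network iota h omega @` D n).
Proof.
move=> iota_maps ik bottleneck lip omega_lip.
have hk := hidden_comp_ebounded i bottleneck lip k.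
apply: subset_ebounded (lipschitz_on_ebounded omega_lip _ (hk _)).
- move=> _ [x Dx <-]; exists (hidden_comp h k (iota x)) => //.
  by exists (iota x) => //; apply: iota_maps.
- by move=> _ [x Dx <-]; apply: hidden_comp_maps_into (leqnn k) _ Dx.
- by rewrite ik leqnn.
Qed.

End Network.

Section ApproximationError.
Context {R : realType} {n m : nat}.

Lemma surj_onto_error_unbounded {A : set 'rV[R]_n} {B : set 'rV[R]_m}
    {f : 'rV[R]_n -> 'rV[R]_m} (g : 'rV[R]_n -> 'rV[R]_m) :
  surj_onto A B f -> ~ ebounded B -> ebounded (g @` A) ->
  forall r, exists2 x, A x & r <= enorm (f x - g x).
Proof.
move=> f_surj nbB [M gM] r.
have [y By y_large] := not_eboundedP nbB (2 * (r + M)).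
have [x Ax fxy] := f_surj y By.
exists x => //.
have gxM : enorm (g x) <= M by apply: gM; exists x.
have := enormD_le (f x - g x) (g x); rewrite subrK fxy.
lra.
Qed.

Lemma max_approx_error_pinfty (A : set 'rV[R]_n) (f g : 'rV[R]_n -> 'rV[R]_m) :
  (forall r, exists2 x, A x & r <= enorm (f x - g x)) ->
  max_approx_error A f g = +oo%E.
Proof.
move=> err_unbounded; apply: hasNub_ereal_sup.
- apply/has_ubPn => r; exists (`|r| + 1); last first.
    by have := ler_norm r; lra.
  have [x Ax err] := err_unbounded (`|r| + 1).
  by split; [have := normr_ge0 r; lra | exists x].
- have [x Ax err] := err_unbounded 1.
  by exists 1; split => //; exists x.
Qed.

End ApproximationError.

Theorem theorem4 (R : realType) (D : forall d : nat, set 'rV[R]_d) (n m : nat)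
  (f : 'rV[R]_n -> 'rV[R]_m)
  (k : nat) (d : nat -> nat)
  (iota : 'rV[R]_n -> 'rV[R]_(d 0%N))
  (h : forall j, 'rV[R]_(d j) -> 'rV[R]_(d j.+1))
  (omega : 'rV[R]_(d k) -> 'rV[R]_m)
  (i : nat) :
  ~ ebounded (D n) -> ~ ebounded (D m) ->
  maps_into (D n) (D m) f -> surj_onto (D n) (D m) f ->
  affine_layer iota -> maps_into (D n) (D (d 0%N)) iota ->
  (forall j, (j < k)%N -> maps_into (D (d j)) (D (d j.+1)) (h j)) ->
  affine_layer omega -> maps_into (D (d k)) (D m) omega ->
  (i < k)%N ->
  ebounded (h i @` D (d i)) ->
  (forall j, (i < j < k)%N -> lipschitz_on (D (d j)) (h j)) ->
  lipschitz_on (D (d k)) omega ->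
  max_approx_error (D n) f (network iota h omega) = +oo%E.
Proof.
move=> _ nbDm _ f_surj _ iota_maps h_maps _ _ ik bottleneck lip omega_lip.
apply/max_approx_error_pinfty/(surj_onto_error_unbounded _ f_surj nbDm).
exact: (network_ebounded h_maps iota_maps ik bottleneck lip omega_lip).
Qed.
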